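(* Let $(\mathcal{C},f,m)$ be a Floer triple over a field $\mathbb{F}$. Then both chain complexes $\varinjlim_{b\to\infty}\varprojlim_{a\to-\infty}CM_a^b$ and $\varprojlim_{a\to-\infty}\varinjlim_{b\to\infty}CM_a^b$ are naturally isomorphic to the Novikov complex $(\Lambda,\partial)$, the canonical chain map $k$ between them is an isomorphism (hence so is $Hk$), and $H(\varinjlim_b\varprojlim_a CM)\cong H(\varprojlim_a\varinjlim_b CM)\cong HM$.
   Context: A Floer triple $(\mathcal{C},f,m)$ over a field $\mathbb{F}$: a set $\mathcal{C}$, $f\colon\mathcal{C}\to\mathbb{R}$, $m\colon\mathcal{C}\times\mathcal{C}\to\mathbb{F}$ with (i) $\mathcal{C}_a^b=\{c: a\le f(c)\le b\}$ finite for all $a\le b$; (ii) $m(c_1,c_2)\ne0\Rightarrow f(c_1)<f(c_2)$; (iii) $\sum_{c_2}m(c_1,c_2)m(c_2,c_3)=0$ for all $c_1,c_3$. $CM_a^b$ is the $\mathbb{F}$-vector space with basis $\mathcal{C}_a^b$ (zero if $a>b$), $\partial_a^b c=\sum_{c'\in\mathcal{C}_a^b}m(c',c)c'$. For $a_1\le a_2$, $p^b_{a_2,a_1}\colon CM^b_{a_1}\to CM^b_{a_2}$ sends $c\mapsto c$ if $f(c)\ge a_2$, else $0$; for $b_1\le b_2$, $i_a^{b_2,b_1}$ is the inclusion. The inverse limit over $a$ is taken with respect to the $p$'s (compatible families), the direct limit over $b$ with respect to the $i$'s. The canonical map $k\colon\varinjlim_b\varprojlim_a CM\to\varprojlim_a\varinjlim_b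 CM$ sends the class of $(x_a)_a\in\varprojlim_a CM_a^b$ to $(i_a^b x_a)_a$, with $i_a^b\colon CM_a^b\to\varinjlim_{b'}CM_a^{b'}$ canonical. The Novikov complex $\Lambda$ consists of formal sums $\sum_{c\in\mathcal{C}}\gamma_c c$, $\gamma_c\in\mathbb{F}$, with $\{c:\gamma_c\neq0, f(c)>b\}$ finite for all $b$, and $\partial\sum\gamma_cc=\sum_c\gamma_c\sum_{c'}m(c',c)c'$; $HM=H(\Lambda,\partial)$. *)

From Stdlib Require Import Reals ClassicalEpsilon.
From HB Require Import structures.
From mathcomp Require Import all_boot all_order all_algebra.
Set Implicit Arguments. Unset Strict Implicit. Unset Printing Implicit Defensive.
Import GRing.Theory.
Local Open Scope ring_scope.

(* Sum over a set C of a family with finite support: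
   \sum_{c} g c  (the sum over any duplicate-free list containing the
   support; 0 by convention if the support is infinite, which never
   happens in the uses below).                                          *)
Definition fsum (V : nmodType) (C : eqType) (g : C -> V) : V :=
  match excluded_middle_informative
          (exists s : seq C, uniq s /\ forall c, g c != 0 -> c \in s) with
  | left H => \sum_(c <- proj1_sig (constructive_indefinite_description _ H)) g c
  | right _ => 0
  end.

Definition floer_triple (F : fieldType) (C : eqType) (f : C -> R)
    (m : C -> C -> F) : Prop :=
  (forall a b : R, exists s : seq C,
      forall c, (c \in s) <-> (Rle a (f c) /\ Rle (f c) b)) /\
  (forall c1 c2, m c1 c2 != 0 -> Rlt (f c1) (f c2)) /\
  (forall c1 c3, fsum (fun c2 => m c1 c2 * m c2 c3) = 0).

(* Chain complexes over F presented concretely as "subsetoids":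
   a carrier, a membership predicate, an equality (equivalence) on members,
   the vector space operations and the differential.                    *)
Record cx (F : Type) := CX {
  ccar : Type;
  cmem : ccar -> Prop;
  ceqv : ccar -> ccar -> Prop;
  czero : ccar;
  cadd : ccar -> ccar -> ccar;
  cscl : F -> ccar -> ccar;
  cdif : ccar -> ccar }.
Arguments ccar {F} c.
Arguments cmem {F} c _.
Arguments ceqv {F} c _ _.
Arguments czero {F} c.
Arguments cadd {F} c _ _.
Arguments cscl {F} c _ _.
Arguments cdif {F} c _.

Section Complexes.
Variable F : fieldType.

Definition chain_complex (X : cx F) : Prop :=
  (forall x, cmem X x -> ceqv X x x) /\
  (forall x y, ceqv X x y -> ceqv X y x) /\
  (forall x y z, ceqv X x y -> ceqv X y z -> ceqv X x z) /\
  cmem X (czero X) /\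
  (forall x y, cmem X x -> cmem X y -> cmem X (cadd X x y)) /\
  (forall k x, cmem X x -> cmem X (cscl X k x)) /\
  (forall x, cmem X x -> cmem X (cdif X x)) /\
  (forall x x' y y', cmem X x -> cmem X x' -> cmem X y -> cmem X y' ->
     ceqv X x x' -> ceqv X y y' -> ceqv X (cadd X x y) (cadd X x' y')) /\
  (forall k x x', cmem X x -> cmem X x' -> ceqv X x x' ->
     ceqv X (cscl X k x) (cscl X k x')) /\
  (forall x x', cmem X x -> cmem X x' -> ceqv X x x' ->
     ceqv X (cdif X x) (cdif X x')) /\
  (forall x y, cmem X x -> cmem X y ->
     ceqv X (cdif X (cadd X x y)) (cadd X (cdif X x) (cdif X y))) /\
  (forall k x, cmem X x -> ceqv X (cdif X (cscl X k x)) (cscl X k (cdif X x))) /\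
  (forall x, cmem X x -> ceqv X (cdif X (cdif X x)) (czero X)).

Definition chain_iso (X Y : cx F) (phi : ccar X -> ccar Y) : Prop :=
  (forall x, cmem X x -> cmem Y (phi x)) /\
  (forall x x', cmem X x -> cmem X x' -> ceqv X x x' -> ceqv Y (phi x) (phi x')) /\
  (forall x y, cmem X x -> cmem X y ->
     ceqv Y (phi (cadd X x y)) (cadd Y (phi x) (phi y))) /\
  (forall k x, cmem X x -> ceqv Y (phi (cscl X k x)) (cscl Y k (phi x))) /\
  (forall x, cmem X x -> ceqv Y (phi (cdif X x)) (cdif Y (phi x))) /\
  (forall x x', cmem X x -> cmem X x' -> ceqv Y (phi x) (phi x') -> ceqv X x x') /\
  (forall y, cmem Y y -> exists x, cmem X x /\ ceqv Y (phi x) y).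

Definition cycle (X : cx F) (x : ccar X) : Prop :=
  cmem X x /\ ceqv X (cdif X x) (czero X).

Definition homologous (X : cx F) (x y : ccar X) : Prop :=
  exists z, cmem X z /\ ceqv X (cadd X x (cscl X (-1) y)) (cdif X z).

Definition homology_iso (X Y : cx F) (phi : ccar X -> ccar Y) : Prop :=
  (forall x, cycle x -> cycle (phi x)) /\
  (forall x x', cycle x -> cycle x' -> homologous x x' ->
     homologous (phi x) (phi x')) /\
  (forall x y, cycle x -> cycle y ->
     homologous (phi (cadd X x y)) (cadd Y (phi x) (phi y))) /\
  (forall k x, cycle x -> homologous (phi (cscl X k x)) (cscl Y k (phi x))) /\
  (forall x x', cycle x -> cycle x' -> homologous (phi x) (phi x') ->
     homologous x x') /\
  (forall y, cycle y -> exists x, cycle x /\ homologous (phi x) y).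

Variables (C : eqType) (f : C -> R) (m : C -> C -> F).

(* An element of CM_a^b is represented by its coefficient function
   C -> F, supported in C_a^b. *)
Definition inCM (a b : R) (x : C -> F) : Prop :=
  forall c, x c != 0 -> Rle a (f c) /\ Rle (f c) b.

(* p^b_{a2,a1} : CM^b_{a1} -> CM^b_{a2}, c |-> c if f c >= a2, else 0 *)
Definition pmap (a2 : R) (x : C -> F) : C -> F :=
  fun c => if Rle_dec a2 (f c) then x c else 0.

(* \partial_a^b c = \sum_{c' in C_a^b} m(c',c) c', extended linearly *)
Definition dCM (a b : R) (x : C -> F) : C -> F :=
  fun c' => if Rle_dec a (f c') then
              (if Rle_dec (f c') b then fsum (fun c => x c * m c' c) else 0)
            else 0.

(* lim_{b ->} lim_{<- a} CM_a^b : an element is the class of a pair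
   (b, (x_a)_a) with (x_a)_a a compatible family in prod_a CM_a^b;
   the inclusions i are identities on coefficient functions, so
   (b1,x) ~ (b2,y) iff i x = i y in some CM^b with b >= b1, b2. *)
Definition DirInv : cx F := {|
  ccar := (R * (R -> C -> F))%type;
  cmem := fun bx => (forall a, inCM a bx.1 (bx.2 a)) /\
                   (forall a1 a2, Rle a1 a2 ->
                      forall c, bx.2 a2 c = pmap a2 (bx.2 a1) c);
  ceqv := fun bx by_ => exists b, Rle bx.1 b /\ Rle by_.1 b /\
                   forall a c, bx.2 a c = by_.2 a c;
  czero := (R0, fun _ _ => 0);
  cadd := fun bx by_ => (Rmax bx.1 by_.1, fun a c => bx.2 a c + by_.2 a c);
  cscl := fun k bx => (bx.1, fun a c => k * bx.2 a c);
  cdif := fun bx => (bx.1, fun a => dCM a bx.1 (bx.2 a)) |}.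

(* equality in lim_{b ->} CM_a^b (a fixed) of classes of pairs (b, x) *)
Definition eqvDir (bx by_ : R * (C -> F)) : Prop :=
  exists b, Rle bx.1 b /\ Rle by_.1 b /\ forall c, bx.2 c = by_.2 c.

(* lim_{<- a} lim_{b ->} CM_a^b : compatible families (z_a)_a, z_a in
   lim_{b->} CM_a^b, for the maps induced by the p's. *)
Definition InvDir : cx F := {|
  ccar := R -> (R * (C -> F));
  cmem := fun z => (forall a, inCM a (z a).1 (z a).2) /\
                  (forall a1 a2, Rle a1 a2 ->
                     eqvDir (z a2) ((z a1).1, pmap a2 (z a1).2));
  ceqv := fun z w => forall a, eqvDir (z a) (w a);
  czero := fun _ => (R0, fun _ => 0);
  cadd := fun z w a => (Rmax (z a).1 (w a).1, fun c => (z a).2 c + (w a).2 c);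
  cscl := fun k z a => ((z a).1, fun c => k * (z a).2 c);
  cdif := fun z a => ((z a).1, dCM a (z a).1 (z a).2) |}.

(* Novikov complex: formal sums sum gamma_c c with
   {c | gamma_c <> 0, f c > b} finite for all b. *)
Definition novikov (g : C -> F) : Prop :=
  forall b : R, exists s : seq C, forall c, g c != 0 -> Rlt b (f c) -> c \in s.

Definition Novikov : cx F := {|
  ccar := C -> F;
  cmem := novikov;
  ceqv := fun g h => forall c, g c = h c;
  czero := fun _ => 0;
  cadd := fun g h c => g c + h c;
  cscl := fun k g c => k * g c;
  cdif := fun g c' => fsum (fun c => g c * m c' c) |}.

(* The canonical map k : lim_b lim_a CM -> lim_a lim_b CM,
   [(x_a)_a] |-> (i_a^b x_a)_a. *)
Definition kmap (bx : ccar DirInv) : ccar InvDir := fun a => (bx.1, bx.2 a).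

(* Canonical maps to the Novikov complex: the coefficient of c is the
   coefficient of c in the component at level a = f c (equivalently at
   any level a <= f c). *)
Definition DirInv_to_Nov (bx : ccar DirInv) : ccar Novikov :=
  fun c => bx.2 (f c) c.

Definition InvDir_to_Nov (z : ccar InvDir) : ccar Novikov :=
  fun c => (z (f c)).2 c.

End Complexes.

(* An element of either limit is a family of chains x_a in CM_a^{b_a}, compatible
   under the projections p.  Compatibility forces x_a = p_a(g) for the single formal
   sum g c := x_{f c}(c), which is a Novikov chain because the windows C_a^b are
   finite; conversely a Novikov chain g has support bounded above by some B and is
   recovered from the family (p_a g) in CM^B.  Under x |-> g the truncated
   differentials become the Novikov differential, whose square vanishes by (iii)
   after exchanging two finite sums, so both limits are chain complexes isomorphic
   to the Novikov complex.  The limits commute because a compatible family of the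
   inverse limit of direct limits is supported below one common bound, read off at
   a = 0: hence k, which preserves g, is onto and an isomorphism, and chain
   isomorphisms induce isomorphisms in homology. *)

From Pilot Require Import Defs.
From Stdlib Require Import Reals ClassicalEpsilon FunctionalExtensionality.
From mathcomp Require Import all_boot all_order all_algebra.
Set Implicit Arguments. Unset Strict Implicit. Unset Printing Implicit Defensive.
Import GRing.Theory.
Local Open Scope ring_scope.

Section FiniteSums.
Variable V : nmodType.

Definition fin_supp (C : eqType) (g : C -> V) : Prop :=
  exists s : seq C, forall c, g c != 0 -> c \in s.

Lemma fsumE (C : eqType) (g : C -> V) (s : seq C) :
  (forall c, g c != 0 -> c \in s) -> fsum g = \sum_(c <- undup s) g c.
Proof.
move=> gs; have us : uniq (undup s) by exact: undup_uniq.
have gus c : g c != 0 -> c \in undup s by rewrite mem_undup; exact: gs.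
rewrite /fsum; case: excluded_middle_informative => [fin|[]]; last by exists (undup s).
case: (constructive_indefinite_description _ fin) => t [ut gt] /=.
apply: perm_big_supp; apply: uniq_perm; rewrite ?filter_uniq // => c.
by rewrite !mem_filter; case: (boolP (g c != 0)) => //= /[dup] /gt -> /gus ->.
Qed.

Lemma eq_fsum (C : eqType) (g h : C -> V) : (forall c, g c = h c) -> fsum g = fsum h.
Proof. by move=> /functional_extensionality ->. Qed.

Lemma fsum0 (C : eqType) (g : C -> V) : (forall c, g c = 0) -> fsum g = 0.
Proof. by move=> g0; rewrite (@fsumE _ _ [::]) ?big_nil // => c; rewrite g0 eqxx. Qed.

Lemma fsum_neq0 (C : eqType) (g : C -> V) : fsum g != 0 -> exists c, g c != 0.
Proof.
move=> nz; case: (classic (exists c, g c != 0)) => // no.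
by case/eqP: nz; apply: fsum0 => c; apply/eqP/negPn/negP => gc; apply: no; exists c.
Qed.

Lemma fsumD (C : eqType) (g h : C -> V) : fin_supp g -> fin_supp h ->
  fsum (fun c => g c + h c) = fsum g + fsum h.
Proof.
move=> [s gs] [t ht]; have gst c : g c != 0 -> c \in s ++ t.
  by move=> /gs; rewrite mem_cat => ->.
have hst c : h c != 0 -> c \in s ++ t by move=> /ht; rewrite mem_cat orbC => ->.
rewrite (fsumE gst) (fsumE hst) (@fsumE _ _ (s ++ t)) ?big_split // => c.
by case: (boolP (g c != 0)) => [/gst //|/negPn/eqP ->]; rewrite add0r; exact: hst.
Qed.

Lemma fsum_exchange (C D : eqType) (g : C -> D -> V) (s : seq C) (t : seq D) :
  (forall c d, g c d != 0 -> c \in s /\ d \in t) ->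
  fsum (fun c => fsum (g c)) = fsum (fun d => fsum (g^~ d)).
Proof.
move=> gst.
have inner_c c : fsum (g c) = \sum_(d <- undup t) g c d by apply: fsumE => d /gst [].
have inner_d d : fsum (g^~ d) = \sum_(c <- undup s) g c d by apply: fsumE => c /gst [].
rewrite (eq_fsum inner_c) (eq_fsum inner_d).
rewrite (@fsumE _ _ s) => [|c]; last first.
  by apply: contraNT => cs; rewrite big1 // => d _; apply: contraNeq cs => /gst [].
rewrite (@fsumE _ _ t) => [|d]; last first.
  by apply: contraNT => dt; rewrite big1 // => c _; apply: contraNeq dt => /gst [].
exact: exchange_big.
Qed.

End FiniteSums.

Lemma mulr_fsuml (R : pzRingType) (C : eqType) (g : C -> R) k :
  fin_supp g -> fsum g * k = fsum (fun c => g c * k).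
Proof.
move=> [s gs]; rewrite (fsumE gs) mulr_suml (@fsumE _ _ _ s) // => c.
by apply: contraNT => cs; rewrite (contraNeq (gs c) cs) mul0r.
Qed.

Lemma mulr_fsumr (R : pzRingType) (C : eqType) (g : C -> R) k :
  fin_supp g -> k * fsum g = fsum (fun c => k * g c).
Proof.
move=> [s gs]; rewrite (fsumE gs) mulr_sumr (@fsumE _ _ _ s) // => c.
by apply: contraNT => cs; rewrite (contraNeq (gs c) cs) mulr0.
Qed.

Section ChainComplexLaws.
Variables (F : fieldType) (X : cx F).
Hypothesis cX : chain_complex X.

Lemma ceqv_refl x : cmem X x -> ceqv X x x.
Proof. by have [H _] := cX; apply: H. Qed.

Lemma ceqv_sym x y : ceqv X x y -> ceqv X y x.
Proof. by have [_ [H _]] := cX; apply: H. Qed.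

Lemma ceqv_trans y x z : ceqv X x y -> ceqv X y z -> ceqv X x z.
Proof. by have [_ [_ [H _]]] := cX; apply: H. Qed.

Lemma cmem0 : cmem X (czero X).
Proof. by have [_ [_ [_ [H _]]]] := cX. Qed.

Lemma cmemD x y : cmem X x -> cmem X y -> cmem X (cadd X x y).
Proof. by have [_ [_ [_ [_ [H _]]]]] := cX; apply: H. Qed.

Lemma cmemZ k x : cmem X x -> cmem X (cscl X k x).
Proof. by have [_ [_ [_ [_ [_ [H _]]]]]] := cX; apply: H. Qed.

Lemma cmem_dif x : cmem X x -> cmem X (cdif X x).
Proof. by have [_ [_ [_ [_ [_ [_ [H _]]]]]]] := cX; apply: H. Qed.

Lemma ceqvD x x' y y' : cmem X x -> cmem X x' -> cmem X y -> cmem X y' ->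
  ceqv X x x' -> ceqv X y y' -> ceqv X (cadd X x y) (cadd X x' y').
Proof. by have [_ [_ [_ [_ [_ [_ [_ [H _]]]]]]]] := cX; apply: H. Qed.

Lemma ceqvZ k x x' : cmem X x -> cmem X x' -> ceqv X x x' ->
  ceqv X (cscl X k x) (cscl X k x').
Proof. by have [_ [_ [_ [_ [_ [_ [_ [_ [H _]]]]]]]]] := cX; apply: H. Qed.

Lemma ceqv_dif x x' : cmem X x -> cmem X x' -> ceqv X x x' ->
  ceqv X (cdif X x) (cdif X x').
Proof. by have [_ [_ [_ [_ [_ [_ [_ [_ [_ [H _]]]]]]]]]] := cX; apply: H. Qed.

Lemma cdifD x y : cmem X x -> cmem X y ->
  ceqv X (cdif X (cadd X x y)) (cadd X (cdif X x) (cdif X y)).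
Proof. by have [_ [_ [_ [_ [_ [_ [_ [_ [_ [_ [H _]]]]]]]]]]] := cX; apply: H. Qed.

Lemma cdifZ k x : cmem X x -> ceqv X (cdif X (cscl X k x)) (cscl X k (cdif X x)).
Proof. by have [_ [_ [_ [_ [_ [_ [_ [_ [_ [_ [_ [H _]]]]]]]]]]]] := cX; apply: H. Qed.

Lemma cdifK x : cmem X x -> ceqv X (cdif X (cdif X x)) (czero X).
Proof. by have [_ [_ [_ [_ [_ [_ [_ [_ [_ [_ [_ [_ H]]]]]]]]]]]] := cX; apply: H. Qed.

End ChainComplexLaws.

Definition chain_emb (F : fieldType) (X Y : cx F) (phi : ccar X -> ccar Y) : Prop :=
  (forall x, cmem X x -> cmem Y (phi x)) /\
  (forall x x', cmem X x -> cmem X x' -> ceqv X x x' -> ceqv Y (phi x) (phi x')) /\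
  (forall x y, cmem X x -> cmem X y ->
     ceqv Y (phi (cadd X x y)) (cadd Y (phi x) (phi y))) /\
  (forall k x, cmem X x -> ceqv Y (phi (cscl X k x)) (cscl Y k (phi x))) /\
  (forall x, cmem X x -> ceqv Y (phi (cdif X x)) (cdif Y (phi x))) /\
  (forall x x', cmem X x -> cmem X x' -> ceqv Y (phi x) (phi x') -> ceqv X x x').

Lemma chain_isoP (F : fieldType) (X Y : cx F) (phi : ccar X -> ccar Y) :
  chain_iso phi <->
  chain_emb phi /\ (forall y, cmem Y y -> exists x, cmem X x /\ ceqv Y (phi x) y).
Proof.
split=> [[h1 [h2 [h3 [h4 [h5 [h6 h7]]]]]] | [[h1 [h2 [h3 [h4 [h5 h6]]]]] h7]].
  exact: conj (conj h1 (conj h2 (conj h3 (conj h4 (conj h5 h6))))) h7.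
exact: conj h1 (conj h2 (conj h3 (conj h4 (conj h5 (conj h6 h7))))).
Qed.

Section ChainEmbedding.
Variables (F : fieldType) (X Y : cx F) (phi : ccar X -> ccar Y).
Hypotheses (cY : chain_complex Y) (phi_emb : chain_emb phi)
  (phi0 : ceqv Y (phi (czero X)) (czero Y)).

Let phi_mem := proj1 phi_emb.
Let phi_eqv := proj1 (proj2 phi_emb).
Let phiD := proj1 (proj2 (proj2 phi_emb)).
Let phiZ := proj1 (proj2 (proj2 (proj2 phi_emb))).
Let phi_dif := proj1 (proj2 (proj2 (proj2 (proj2 phi_emb)))).
Let phi_inj := proj2 (proj2 (proj2 (proj2 (proj2 phi_emb)))).

Section Pullback.
Hypotheses (eqvX_sym : forall x y, ceqv X x y -> ceqv X y x)
  (eqvX_trans : forall x y z, ceqv X x y -> ceqv X y z -> ceqv X x z)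
  (memX0 : cmem X (czero X))
  (memXD : forall x y, cmem X x -> cmem X y -> cmem X (cadd X x y))
  (memXZ : forall k x, cmem X x -> cmem X (cscl X k x))
  (memX_dif : forall x, cmem X x -> cmem X (cdif X x)).

Lemma pullback_ceqvD x x' y y' : cmem X x -> cmem X x' -> cmem X y -> cmem X y' ->
  ceqv X x x' -> ceqv X y y' -> ceqv X (cadd X x y) (cadd X x' y').
Proof.
move=> hx hx' hy hy' ex ey; apply: phi_inj; try exact: memXD.
apply: (ceqv_trans cY (phiD hx hy) _).
apply: (ceqv_trans cY _ (ceqv_sym cY (phiD hx' hy'))).
by apply: (ceqvD cY); try apply: phi_mem; try apply: phi_eqv.
Qed.

Lemma pullback_ceqvZ k x x' : cmem X x -> cmem X x' -> ceqv X x x' ->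
  ceqv X (cscl X k x) (cscl X k x').
Proof.
move=> hx hx' ex; apply: phi_inj; try exact: memXZ.
apply: (ceqv_trans cY (phiZ k hx) _).
apply: (ceqv_trans cY _ (ceqv_sym cY (phiZ k hx'))).
by apply: (ceqvZ cY); try apply: phi_mem; try apply: phi_eqv.
Qed.

Lemma pullback_ceqv_dif x x' : cmem X x -> cmem X x' -> ceqv X x x' ->
  ceqv X (cdif X x) (cdif X x').
Proof.
move=> hx hx' ex; apply: phi_inj; try exact: memX_dif.
apply: (ceqv_trans cY (phi_dif hx) _).
apply: (ceqv_trans cY _ (ceqv_sym cY (phi_dif hx'))).
by apply: (ceqv_dif cY); try apply: phi_mem; try apply: phi_eqv.
Qed.

Lemma pullback_cdifD x y : cmem X x -> cmem X y ->
  ceqv X (cdif X (cadd X x y)) (cadd X (cdif X x) (cdif X y)).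
Proof.
move=> hx hy; have [mx my] := (phi_mem hx, phi_mem hy).
apply: phi_inj; [exact/memX_dif/memXD | exact: memXD (memX_dif hx) (memX_dif hy)|].
apply: (ceqv_trans cY (phi_dif (memXD hx hy)) _).
have mxy := phi_mem (memXD hx hy).
apply: (ceqv_trans cY (ceqv_dif cY mxy (cmemD cY mx my) (phiD hx hy)) _).
apply: (ceqv_trans cY (cdifD cY mx my) _).
apply: (ceqv_trans cY _ (ceqv_sym cY (phiD (memX_dif hx) (memX_dif hy)))).
apply: (ceqvD cY); try exact: (cmem_dif cY _); try exact: (phi_mem (memX_dif _)).
  exact: (ceqv_sym cY (phi_dif hx)).
exact: (ceqv_sym cY (phi_dif hy)).
Qed.

Lemma pullback_cdifZ k x : cmem X x ->
  ceqv X (cdif X (cscl X k x)) (cscl X k (cdif X x)).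
Proof.
move=> hx; have mx := phi_mem hx.
apply: phi_inj; [exact/memX_dif/memXZ | exact/memXZ/memX_dif|].
apply: (ceqv_trans cY (phi_dif (memXZ k hx)) _).
apply: (ceqv_trans cY (ceqv_dif cY (phi_mem (memXZ k hx)) (cmemZ cY k mx) (phiZ k hx)) _).
apply: (ceqv_trans cY (cdifZ cY k mx) _).
apply: (ceqv_trans cY _ (ceqv_sym cY (phiZ k (memX_dif hx)))).
apply: (ceqvZ cY); [exact: (cmem_dif cY mx) | exact: (phi_mem (memX_dif hx)) |].
exact: (ceqv_sym cY (phi_dif hx)).
Qed.

Lemma pullback_cdifK x : cmem X x -> ceqv X (cdif X (cdif X x)) (czero X).
Proof.
move=> hx; have mx := phi_mem hx.
apply: phi_inj => //; first exact/memX_dif/memX_dif.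
apply: (ceqv_trans cY (phi_dif (memX_dif hx)) _).
have mdx := phi_mem (memX_dif hx).
apply: (ceqv_trans cY (ceqv_dif cY mdx (cmem_dif cY mx) (phi_dif hx)) _).
exact: (ceqv_trans cY (cdifK cY mx) (ceqv_sym cY phi0)).
Qed.

Lemma chain_complex_pullback : chain_complex X.
Proof.
split=> [x hx|]; first by apply: phi_inj => //; exact: (ceqv_refl cY (phi_mem hx)).
do 6 (split; first by []).
split; first exact: pullback_ceqvD.
split; first exact: pullback_ceqvZ.
split; first exact: pullback_ceqv_dif.
split; first exact: pullback_cdifD.
split; first exact: pullback_cdifZ.
exact: pullback_cdifK.
Qed.

End Pullback.

Section Homology.
Hypotheses (cX : chain_complex X)
  (phi_surj : forall y, cmem Y y -> exists x, cmem X x /\ ceqv Y (phi x) y)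
  (Y_subrr : forall y, cmem Y y -> ceqv Y (cadd Y y (cscl Y (-1) y)) (czero Y))
  (Y_dif0 : ceqv Y (cdif Y (czero Y)) (czero Y)).

Lemma ceqv_homologous v w : cmem Y v -> cmem Y w -> ceqv Y v w -> homologous v w.
Proof.
move=> hv hw e; exists (czero Y); split; first exact: (cmem0 cY).
apply: (ceqv_trans cY _ (ceqv_trans cY (Y_subrr hv) (ceqv_sym cY Y_dif0))).
apply: (ceqvD cY) => //; try exact: (cmemZ cY).
  exact: (ceqv_refl cY hv).
exact: (ceqvZ cY _ hw hv (ceqv_sym cY e)).
Qed.

Lemma chain_embB x x' : cmem X x -> cmem X x' ->
  ceqv Y (phi (cadd X x (cscl X (-1) x'))) (cadd Y (phi x) (cscl Y (-1) (phi x'))).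
Proof.
move=> hx hx'; apply: (ceqv_trans cY (phiD hx (cmemZ cX _ hx')) _).
apply: (ceqvD cY); try exact: phi_mem; try exact: (cmemZ cY _ (phi_mem hx')).
  exact: (phi_mem (cmemZ cX _ hx')).
  exact: (ceqv_refl cY (phi_mem hx)).
exact: phiZ.
Qed.

Lemma homology_iso_of_chain_maps : homology_iso phi.
Proof.
have cycle_phi x : Defs.cycle x -> Defs.cycle (phi x).
  move=> [hx hdx]; split; first exact: phi_mem.
  apply: (ceqv_trans cY (ceqv_sym cY (phi_dif hx)) (ceqv_trans cY _ phi0)).
  exact: (phi_eqv (cmem_dif cX hx) (cmem0 cX) hdx).
split; first exact: cycle_phi.
split.
  move=> x x' [hx _] [hx' _] [z [hz e]]; exists (phi z); split; first exact: phi_mem.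
  apply: (ceqv_trans cY (ceqv_sym cY (chain_embB hx hx')) (ceqv_trans cY _ (phi_dif hz))).
  apply: (phi_eqv _ _ e) => //; last exact: (cmem_dif cX hz).
  exact: (cmemD cX hx (cmemZ cX _ hx')).
split.
  move=> x y [hx _] [hy _]; apply: (ceqv_homologous _ _ (phiD hx hy)).
    exact/phi_mem/(cmemD cX).
  exact: (cmemD cY (phi_mem hx) (phi_mem hy)).
split.
  move=> k x [hx _]; apply: (ceqv_homologous _ _ (phiZ k hx)).
    exact/phi_mem/(cmemZ cX).
  exact: (cmemZ cY _ (phi_mem hx)).
split.
  move=> x x' [hx _] [hx' _] [w [hw e]]; have [z [hz ez]] := phi_surj hw.
  exists z; split => //; apply: phi_inj; last first.
    apply: (ceqv_trans cY (chain_embB hx hx') (ceqv_trans cY e _)).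
    apply: (ceqv_trans cY _ (ceqv_sym cY (phi_dif hz))).
    exact: (ceqv_dif cY hw (phi_mem hz) (ceqv_sym cY ez)).
    exact: (cmem_dif cX hz).
  exact: (cmemD cX hx (cmemZ cX _ hx')).
move=> y [hy hdy]; have [x [hx e]] := phi_surj hy.
have hcx : Defs.cycle x.
  split => //; apply: phi_inj; [exact: (cmem_dif cX hx) | exact: (cmem0 cX) |].
  apply: (ceqv_trans cY (phi_dif hx) (ceqv_trans cY _ (ceqv_sym cY phi0))).
  exact: (ceqv_trans cY (ceqv_dif cY (phi_mem hx) hy e) hdy).
by exists x; split => //; apply: ceqv_homologous => //; exact: phi_mem.
Qed.

End Homology.
End ChainEmbedding.

Lemma homology_iso_of_chain_iso (F : fieldType) (X Y : cx F) (phi : ccar X -> ccar Y) :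
  chain_complex X -> chain_complex Y -> chain_iso phi ->
  ceqv Y (phi (czero X)) (czero Y) ->
  (forall y, cmem Y y -> ceqv Y (cadd Y y (cscl Y (-1) y)) (czero Y)) ->
  ceqv Y (cdif Y (czero Y)) (czero Y) -> homology_iso phi.
Proof.
by move=> cX cY /chain_isoP [emb surj] phi0; apply: homology_iso_of_chain_maps.
Qed.

Lemma seq_bounded (T : eqType) (h : T -> R) (s : seq T) :
  exists B, forall t, t \in s -> Rle (h t) B.
Proof.
elim: s => [|t s [B hB]]; first by exists R0.
exists (Rmax (h t) B) => u; rewrite in_cons => /orP [/eqP -> | /hB hu].
  exact: Rmax_l.
exact: Rle_trans hu (Rmax_r _ _).
Qed.

Section Floer.
Variables (F : fieldType) (C : eqType) (f : C -> R) (m : C -> C -> F).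
Hypothesis floer : floer_triple f m.

Let finite_windows := proj1 floer.
Let m_increasing := proj1 (proj2 floer).
Let m_squares_to_zero := proj2 (proj2 floer).

Lemma novikovP (g : C -> F) :
  novikov f g <-> exists B, forall c, g c != 0 -> Rle (f c) B.
Proof.
split=> [nov | [B gB] b].
  have [s hs] := nov R0; have [B hB] := seq_bounded f s.
  exists (Rmax B R0) => c gc; case: (Rle_dec (f c) R0) => h0.
    exact: Rle_trans h0 (Rmax_r _ _).
  exact: Rle_trans (hB _ (hs _ gc (Rnot_le_lt _ _ h0))) (Rmax_l _ _).
have [s hs] := finite_windows b B; exists s => c gc hb.
by apply/hs; split; [exact: Rlt_le | exact: gB].
Qed.

Definition dNov (v : C -> F) : C -> F := fun c' => fsum (fun c => v c * m c' c).

Lemma fin_supp_dNov v c : novikov f v -> fin_supp (fun c0 => v c0 * m c c0).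
Proof.
move=> nv; have [s hs] := nv (f c); exists s => c0.
by rewrite mulf_eq0 negb_or => /andP [/hs vc0 /m_increasing /vc0].
Qed.

Lemma dNovD v w c : novikov f v -> novikov f w ->
  dNov (fun c0 => v c0 + w c0) c = dNov v c + dNov w c.
Proof.
move=> nv nw; rewrite /dNov -fsumD; try exact: fin_supp_dNov.
by apply: eq_fsum => c0; rewrite mulrDl.
Qed.

Lemma dNovZ k v c : novikov f v -> dNov (fun c0 => k * v c0) c = k * dNov v c.
Proof.
move=> nv; rewrite /dNov mulr_fsumr; last exact: fin_supp_dNov.
by apply: eq_fsum => c0; rewrite mulrA.
Qed.

Lemma dNov0 c : dNov (fun _ => 0) c = 0.
Proof. by apply: fsum0 => c0; rewrite mul0r. Qed.

Lemma eq_dNov v w c : (forall c0, Rlt (f c) (f c0) -> v c0 = w c0) ->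
  dNov v c = dNov w c.
Proof.
move=> vw; apply: eq_fsum => c0.
by case: (boolP (m c c0 == 0)) => [/eqP -> | /m_increasing /vw ->]; rewrite ?mulr0.
Qed.

Lemma dNov_lt v B c : (forall c0, v c0 != 0 -> Rle (f c0) B) ->
  dNov v c != 0 -> Rlt (f c) B.
Proof.
move=> vB /fsum_neq0 [c0]; rewrite mulf_eq0 negb_or => /andP [/vB h1 /m_increasing h2].
exact: Rlt_le_trans h2 h1.
Qed.

Lemma dNov_novikov v : novikov f v -> novikov f (dNov v).
Proof.
move=> /novikovP [B vB]; apply/novikovP; exists B => c.
by move/(dNov_lt vB)/Rlt_le.
Qed.

(* [d d = 0] is [m * m = 0] after exchanging the two sums, which are finite:
   [c0] ranges over the support of [v] above [f c], [c1] over the window [f c, B]. *)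
Lemma dNovK v c : novikov f v -> dNov (dNov v) c = 0.
Proof.
move=> nv; have [s vs] := nv (f c); have /novikovP [B vB] := nv.
have [t ht] := finite_windows (f c) B.
pose g c1 c0 := v c0 * m c1 c0 * m c c1.
have -> : dNov (dNov v) c = fsum (fun c1 => fsum (g c1)).
  by apply: eq_fsum => c1; apply: mulr_fsuml; exact: fin_supp_dNov.
rewrite (@fsum_exchange _ _ _ g t s) => [|c1 c0]; last first.
  rewrite !mulf_eq0 !negb_or => /andP [/andP [v0 /m_increasing h1] /m_increasing h2].
  split; last by apply: vs v0 (Rlt_trans _ _ _ h2 h1).
  apply/ht; split; first exact: Rlt_le.
  exact: Rle_trans (Rlt_le _ _ h1) (vB _ v0).
apply: fsum0 => c0; rewrite -[RHS](mulr0 (v c0)) -(m_squares_to_zero c c0).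
rewrite mulr_fsumr; first by apply: eq_fsum => c1; rewrite /g mulrAC -mulrA.
have [u hu] := finite_windows (f c) (f c0); exists u => c1.
rewrite mulf_eq0 negb_or => /andP [/m_increasing h1 /m_increasing h2].
by apply/hu; split; apply: Rlt_le.
Qed.

Lemma Novikov_chain_complex : chain_complex (Novikov f m).
Proof.
split; first by [].
split; first by move=> x y e c; rewrite e.
split; first by move=> x y z e1 e2 c; rewrite e1 e2.
split; first by apply/novikovP; exists R0 => c; rewrite eqxx.
split.
  move=> x y hx hy b; have [s1 h1] := hx b; have [s2 h2] := hy b.
  exists (s1 ++ s2) => c /= h hb; rewrite mem_cat.
  case: (boolP (x c != 0)) => [/h1 -> // | /negPn/eqP x0].
  by rewrite x0 add0r in h; rewrite (h2 _ h hb) orbT.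
split.
  move=> k x hx b; have [s hs] := hx b; exists s => c.
  by rewrite mulf_eq0 negb_or => /andP [_ /hs].
split; first exact: dNov_novikov.
split; first by move=> x x' y y' _ _ _ _ ex ey c /=; rewrite ex ey.
split; first by move=> k x x' _ _ ex c /=; rewrite ex.
split; first by move=> x x' _ _ ex c; apply: eq_fsum => c0; rewrite ex.
split; first by move=> x y hx hy c; apply: dNovD.
split; first by move=> k x hx c; apply: dNovZ.
by move=> x hx c; apply: dNovK.
Qed.

Lemma pmap_le a (g : C -> F) c : Rle a (f c) -> Defs.pmap f a g c = g c.
Proof. by rewrite /Defs.pmap /=; case: Rle_dec. Qed.

Lemma pmap_pmap a1 a2 (g : C -> F) c :
  Rle a1 a2 -> Defs.pmap f a2 (Defs.pmap f a1 g) c = Defs.pmap f a2 g c.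
Proof.
move=> ha; rewrite /Defs.pmap /=; case: Rle_dec => // h2; case: Rle_dec => // h1.
by case: h1; exact: Rle_trans ha h2.
Qed.

Lemma dCM_pmap a b v c : inCM f a b v -> dCM f m a b v c = Defs.pmap f a (dNov v) c.
Proof.
move=> hv; rewrite /dCM /Defs.pmap /=; case: Rle_dec => // ha; case: Rle_dec => // hb.
apply/esym/eqP; apply: contraT => /(dNov_lt (fun c0 h => proj2 (hv c0 h))) lt.
by case: hb; apply: Rlt_le.
Qed.

(* [b] is constant for [DirInv], and [fun a => (z a).1] for [InvDir]. *)
Definition compatible_family (b : R -> R) (x : R -> C -> F) : Prop :=
  (forall a, inCM f a (b a) (x a)) /\
  (forall a1 a2, Rle a1 a2 -> forall c, x a2 c = Defs.pmap f a2 (x a1) c).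

Definition diag (x : R -> C -> F) : C -> F := fun c => x (f c) c.

Lemma familyE b x a c : compatible_family b x -> x a c = Defs.pmap f a (diag x) c.
Proof.
move=> [hx hc]; rewrite /Defs.pmap /diag; case: Rle_dec => ha.
  by rewrite (hc _ _ ha) pmap_le //; apply: Rle_refl.
by case: (boolP (x a c == 0)) => [/eqP // | /(hx a c) []].
Qed.

Lemma family_eq b b' x x' : compatible_family b x -> compatible_family b' x' ->
  (forall c, diag x c = diag x' c) -> forall a c, x a c = x' a c.
Proof.
by move=> hx hx' e a c; rewrite (familyE a c hx) (familyE a c hx') /Defs.pmap e.
Qed.

(* This is why [k] is onto: the family lies in the single [CM^B]. *)
Lemma family_uniform b x :
  compatible_family b x -> exists B, compatible_family (fun _ => B) x.
Proof.
move=> hx; exists (Rmax (b R0) R0); split; last exact: hx.2.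
move=> a c xac; have [ha _] := hx.1 a c xac; split => //.
case: (Rle_dec (f c) R0) => h0; first exact: Rle_trans h0 (Rmax_r _ _).
have x0c : x R0 c = x a c.
  by rewrite !(familyE _ c hx) !pmap_le //; apply: Rlt_le; apply: Rnot_le_lt.
rewrite -x0c in xac; exact: Rle_trans (proj2 (hx.1 R0 c xac)) (Rmax_l _ _).
Qed.

Lemma diag_novikov b x : compatible_family b x -> novikov f (diag x).
Proof.
move=> /family_uniform [B [hB _]]; apply/novikovP; exists B => c xc.
exact: (proj2 (hB (f c) c xc)).
Qed.

Lemma dCM_familyE b x a c : compatible_family b x ->
  dCM f m a (b a) (x a) c = Defs.pmap f a (dNov (diag x)) c.
Proof.
move=> hx; rewrite (dCM_pmap c (hx.1 a)) /Defs.pmap /=; case: Rle_dec => // ha.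
apply: eq_dNov => c0 hc0; rewrite (familyE a c0 hx) pmap_le //.
exact: Rle_trans ha (Rlt_le _ _ hc0).
Qed.

Lemma diag_dCM b x c : compatible_family b x ->
  diag (fun a => dCM f m a (b a) (x a)) c = dNov (diag x) c.
Proof. by move=> hx; rewrite /diag (dCM_familyE _ c hx) pmap_le //; apply: Rle_refl. Qed.

Lemma pmap_family B (g : C -> F) : (forall c, g c != 0 -> Rle (f c) B) ->
  compatible_family (fun _ => B) (fun a => Defs.pmap f a g).
Proof.
move=> gB; split=> [a c | a1 a2 ha c]; last by rewrite pmap_pmap.
rewrite /Defs.pmap /=; destruct (Rle_dec a (f c)) as [ha|]; last by rewrite eqxx.
by move=> gc; split; last exact: gB.
Qed.

Lemma diag_pmap (g : C -> F) c : diag (fun a => Defs.pmap f a g) c = g c.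
Proof. by rewrite /diag pmap_le //; apply: Rle_refl. Qed.

Lemma family0 : compatible_family (fun _ => R0) (fun _ _ => 0).
Proof.
by split=> [a c | a1 a2 _ c]; [rewrite eqxx | rewrite /Defs.pmap /=; case: Rle_dec].
Qed.

Lemma familyD b b' x y : compatible_family b x -> compatible_family b' y ->
  compatible_family (fun a => Rmax (b a) (b' a)) (fun a c => x a c + y a c).
Proof.
move=> [hx hxc] [hy hyc]; split=> [a c | a1 a2 ha c]; last first.
  rewrite (hxc _ _ ha) (hyc _ _ ha) /Defs.pmap /=.
  by case: (Rle_dec a2 (f c)) => ? /=; rewrite ?addr0.
case: (boolP (x a c == 0)) => [/eqP -> | /(hx a c) [h1 h2] _]; last first.
  by split=> //; apply: Rle_trans h2 (Rmax_l _ _).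
by rewrite add0r => /(hy a c) [h1 h2]; split=> //; apply: Rle_trans h2 (Rmax_r _ _).
Qed.

Lemma familyZ k b x : compatible_family b x ->
  compatible_family b (fun a c => k * x a c).
Proof.
move=> [hx hxc]; split=> [a c | a1 a2 ha c].
  by rewrite mulf_eq0 negb_or => /andP [_ /(hx a c)].
by rewrite (hxc _ _ ha) /Defs.pmap /=; case: (Rle_dec a2 (f c)) => ? /=; rewrite ?mulr0.
Qed.

Lemma family_dCM b x : compatible_family b x ->
  compatible_family b (fun a => dCM f m a (b a) (x a)).
Proof.
move=> hx; split=> [a c | a1 a2 ha c].
  rewrite /dCM; case: (Rle_dec a (f c)) => [ha|_] /=; last by rewrite eqxx.
  by case: (Rle_dec (f c) (b a)) => [hb|_] /=; [move=> _; split | rewrite eqxx].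
have -> : dCM f m a1 (b a1) (x a1) = Defs.pmap f a1 (dNov (diag x)).
  by apply: functional_extensionality => c0; exact: dCM_familyE.
by rewrite (dCM_familyE a2 c hx) pmap_pmap.
Qed.

Lemma DirInv_eqvP x y : ceqv (DirInv f m) x y <-> forall a c, x.2 a c = y.2 a c.
Proof.
split=> [[b [_ [_ e]]] // | e].
by exists (Rmax x.1 y.1); split; [exact: Rmax_l | split; [exact: Rmax_r |]].
Qed.

Lemma eqvDirP (p q : R * (C -> F)) : eqvDir p q <-> forall c, p.2 c = q.2 c.
Proof.
split=> [[b [_ [_ e]]] // | e].
by exists (Rmax p.1 q.1); split; [exact: Rmax_l | split; [exact: Rmax_r |]].
Qed.

Lemma InvDir_eqvP z w : ceqv (InvDir f m) z w <-> forall a c, (z a).2 c = (w a).2 c.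
Proof. by split=> e a; [apply/eqvDirP | apply/eqvDirP; exact: e]. Qed.

Lemma InvDir_memP z : cmem (InvDir f m) z <->
  compatible_family (fun a => (z a).1) (fun a => (z a).2).
Proof.
split=> [[hz hzc] | [hz hzc]]; split=> // a1 a2 ha; last by apply/eqvDirP; exact: hzc.
by have /eqvDirP := hzc _ _ ha.
Qed.

Lemma DirInv_to_Nov_emb : chain_emb (@DirInv_to_Nov F C f m).
Proof.
split; first by move=> x hx; exact: diag_novikov hx.
split; first by move=> x x' _ _ /DirInv_eqvP e c; exact: e.
do 2 (split; first by []).
split; first by move=> x hx c; exact: diag_dCM hx.
by move=> x x' hx hx' e; apply/DirInv_eqvP; exact: family_eq hx hx' e.
Qed.

Lemma InvDir_to_Nov_emb : chain_emb (@InvDir_to_Nov F C f m).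
Proof.
split; first by move=> z /InvDir_memP hz; exact: diag_novikov hz.
split; first by move=> z z' _ _ /InvDir_eqvP e c; exact: e.
do 2 (split; first by []).
split; first by move=> z /InvDir_memP hz c; exact: diag_dCM hz.
move=> z z' /InvDir_memP hz /InvDir_memP hz' e.
by apply/InvDir_eqvP; exact: family_eq hz hz' e.
Qed.

Lemma DirInv_chain_complex : chain_complex (DirInv f m).
Proof.
apply: (chain_complex_pullback Novikov_chain_complex DirInv_to_Nov_emb) => //.
- by move=> x y /DirInv_eqvP e; apply/DirInv_eqvP => a c; rewrite e.
- move=> x y z /DirInv_eqvP e1 /DirInv_eqvP e2.
  by apply/DirInv_eqvP => a c; rewrite e1 e2.
- exact: family0.
- by move=> x y hx hy; exact: familyD hx hy.
- by move=> k x hx; exact: familyZ hx.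
- by move=> x hx; exact: family_dCM hx.
Qed.

Lemma InvDir_chain_complex : chain_complex (InvDir f m).
Proof.
apply: (chain_complex_pullback Novikov_chain_complex InvDir_to_Nov_emb) => //.
- by move=> z w /InvDir_eqvP e; apply/InvDir_eqvP => a c; rewrite e.
- move=> z w u /InvDir_eqvP e1 /InvDir_eqvP e2.
  by apply/InvDir_eqvP => a c; rewrite e1 e2.
- by apply/InvDir_memP; exact: family0.
- move=> z w /InvDir_memP hz /InvDir_memP hw; apply/InvDir_memP; exact: familyD hz hw.
- by move=> k z /InvDir_memP hz; apply/InvDir_memP; exact: familyZ hz.
- by move=> z /InvDir_memP hz; apply/InvDir_memP; exact: family_dCM hz.
Qed.

Lemma DirInv_to_Nov_iso : chain_iso (@DirInv_to_Nov F C f m).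
Proof.
apply/chain_isoP; split; first exact: DirInv_to_Nov_emb.
move=> g /novikovP [B gB]; exists (B, fun a => Defs.pmap f a g).
by split; [exact: pmap_family | exact: diag_pmap].
Qed.

Lemma InvDir_to_Nov_iso : chain_iso (@InvDir_to_Nov F C f m).
Proof.
apply/chain_isoP; split; first exact: InvDir_to_Nov_emb.
move=> g /novikovP [B gB]; exists (fun a => (B, Defs.pmap f a g)).
by split; [apply/InvDir_memP; exact: pmap_family | exact: diag_pmap].
Qed.

Lemma kmap_iso : chain_iso (@kmap F C f m).
Proof.
apply/chain_isoP; split.
  split; first by move=> x hx; apply/InvDir_memP.
  split; first by move=> x x' _ _ /DirInv_eqvP e; apply/InvDir_eqvP.
  do 3 (split; first by move=> *; apply/InvDir_eqvP).
  by move=> x x' _ _ /InvDir_eqvP e; apply/DirInv_eqvP.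
move=> z /InvDir_memP /family_uniform [B hB]; exists (B, fun a => (z a).2).
by split=> //; apply/InvDir_eqvP.
Qed.

Lemma kmap_homology_iso : homology_iso (@kmap F C f m).
Proof.
apply: (homology_iso_of_chain_iso DirInv_chain_complex InvDir_chain_complex kmap_iso).
- by apply/InvDir_eqvP.
- by move=> z _; apply/InvDir_eqvP => a c /=; rewrite mulN1r addrN.
apply/InvDir_eqvP => a c /=; rewrite (dCM_familyE a c family0) /Defs.pmap /=.
by case: (Rle_dec a (f c)) => ? /=; rewrite ?dNov0.
Qed.

Lemma Novikov_subrr g : cmem (Novikov f m) g ->
  ceqv (Novikov f m) (cadd _ g (cscl _ (-1) g)) (czero _).
Proof. by move=> _ c /=; rewrite mulN1r addrN. Qed.

Lemma DirInv_to_Nov_homology_iso : homology_iso (@DirInv_to_Nov F C f m).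
Proof.
apply: (homology_iso_of_chain_iso DirInv_chain_complex Novikov_chain_complex
  DirInv_to_Nov_iso) => //; [exact: Novikov_subrr | exact: dNov0].
Qed.

Lemma InvDir_to_Nov_homology_iso : homology_iso (@InvDir_to_Nov F C f m).
Proof.
apply: (homology_iso_of_chain_iso InvDir_chain_complex Novikov_chain_complex
  InvDir_to_Nov_iso) => //; [exact: Novikov_subrr | exact: dNov0].
Qed.

End Floer.

Theorem mainTheorem7 (F : fieldType) (C : eqType) (f : C -> R)
    (m : C -> C -> F) :
  floer_triple f m ->
  chain_complex (DirInv f m) /\
  chain_complex (InvDir f m) /\
  chain_complex (Novikov f m) /\
  chain_iso (@DirInv_to_Nov F C f m) /\
  chain_iso (@InvDir_to_Nov F C f m) /\
  (forall x, cmem (DirInv f m) x ->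
     ceqv (Novikov f m) (@InvDir_to_Nov F C f m (@kmap F C f m x))
                        (@DirInv_to_Nov F C f m x)) /\
  chain_iso (@kmap F C f m) /\
  homology_iso (@kmap F C f m) /\
  homology_iso (@DirInv_to_Nov F C f m) /\
  homology_iso (@InvDir_to_Nov F C f m).
Proof.
move=> floer.
split; first exact: DirInv_chain_complex.
split; first exact: InvDir_chain_complex.
split; first exact: Novikov_chain_complex.
split; first exact: DirInv_to_Nov_iso.
split; first exact: InvDir_to_Nov_iso.
split; first by move=> x _ c.
split; first exact: kmap_iso.
split; first exact: kmap_homology_iso.
split; first exact: DirInv_to_Nov_homology_iso.
exact: InvDir_to_Nov_homology_iso.
Qed.
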